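(* Let $B$ be a $p\times q$ matrix, $G$ a $q\times q$ symmetric matrix and $G'$ a $p\times p$ symmetric matrix. Let $$A=\begin{bmatrix} G' & B & B\\ B^T & 0 & G\\ B^T & G & 0\end{bmatrix},\qquad C=\begin{bmatrix} G' & B & B\\ B^T & G & 0\\ B^T & 0 & G\end{bmatrix},$$ both of size $(p+2q)\times(p+2q)$. Then $A\oplus\begin{bmatrix} G & 0\\ 0 & G\end{bmatrix}$ and $C\oplus\begin{bmatrix}0 & G\\ G & 0\end{bmatrix}$ are cospectral.
   Context: For matrices $X,Y$, $X\oplus Y=\begin{bmatrix} X&0\\0&Y\end{bmatrix}$, and $0$ denotes a zero matrix of appropriate size. Two square matrices are cospectral if they have the same eigenvalues with the same multiplicities. *)

From HB Require Import structures.
From mathcomp Require Import all_boot all_order all_algebra.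
Set Implicit Arguments. Unset Strict Implicit. Unset Printing Implicit Defensive.
Import GRing.Theory Num.Theory.
Local Open Scope ring_scope.

Definition dsum (F : nzRingType) (m n : nat) (X : 'M[F]_m) (Y : 'M[F]_n)
  : 'M[F]_(m + n) := block_mx X 0 0 Y.

Definition cospectral (F : fieldType) (n : nat) (X Y : 'M[F]_n) : Prop :=
  forall lambda : F, mup lambda (char_poly X) = mup lambda (char_poly Y).

From mathcomp Require Import all_boot all_order all_algebra.
From mathcomp Require Import reals.
Import GRing.Theory Num.Theory.
Local Open Scope ring_scope.

(* Conjugating by I (+) [[I, 0], [-I, I]] (subtract the second q-block row from
   the third, add the third q-block column to the second) turns
   [[W, U, U], [V, X, Y], [V, Y, X]] into a block upper triangular matrix, so
   its characteristic polynomial is chi([[W, 2U], [V, X + Y]]) * chi(X - Y).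
   With M = [[G', 2B], [B^T, G]] this gives chi(A) = chi(M) chi(-G) and
   chi(C) = chi(M) chi(G), while chi(G (+) G) = chi(G)^2 and
   chi([[0, G], [G, 0]]) = chi(G) chi(-G): both direct sums have
   characteristic polynomial chi(M) chi(G)^2 chi(-G). *)

Section BlockCharPoly.

Variable R : comNzRingType.

Lemma char_poly_conj n {P Q : 'M[R]_n} (M : 'M[R]_n) :
  P *m Q = 1%:M -> char_poly (P *m M *m Q) = char_poly M.
Proof.
move=> PQ1; rewrite /char_poly.
pose Pc := map_mx polyC P; pose Qc := map_mx polyC Q.
have PcQc1 : Pc *m Qc = 1%:M by rewrite -map_mxM PQ1 map_scalar_mx.
have -> : char_poly_mx (P *m M *m Q) = Pc *m char_poly_mx M *m Qc.
  rewrite /char_poly_mx mulmxBr mulmxBl scalar_mxC.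
  by rewrite -[_ *m Pc *m Qc]mulmxA PcQc1 mulmx1 !map_mxM.
by rewrite !det_mulmx mulrAC -det_mulmx PcQc1 det1 mul1r.
Qed.

Lemma char_poly_castmx m n (e : m = n) (M : 'M[R]_m) :
  char_poly (castmx (e, e) M) = char_poly M.
Proof. by case: n / e; rewrite castmx_id. Qed.

Lemma char_poly_ublock m n (A : 'M[R]_m) (B : 'M[R]_(m, n)) (D : 'M[R]_n) :
  char_poly (block_mx A B 0 D) = char_poly A * char_poly D.
Proof.
rewrite /char_poly /char_poly_mx map_block_mx /= map_mx0 scalar_mx_block.
by rewrite opp_block_mx add_block_mx oppr0 !add0r det_ublock.
Qed.

Definition shear_mx n (a : R) : 'M[R]_(n + n) := block_mx 1%:M 0 a%:M 1%:M.

Lemma mul_shear_mx n (a b : R) :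
  shear_mx n a *m shear_mx n b = shear_mx n (a + b).
Proof.
rewrite /shear_mx mulmx_block.
by rewrite !(mulmx0, mul0mx, mulmx1, mul1mx, addr0, add0r) raddfD.
Qed.

Lemma shear_mx0 n : shear_mx n 0 = 1%:M.
Proof. by rewrite /shear_mx raddf0 -scalar_mx_block. Qed.

Lemma shear_mx_conj_sym_block n (X Y : 'M[R]_n) :
  shear_mx n (-1) *m block_mx X Y Y X *m shear_mx n 1 =
  block_mx (X + Y) Y 0 (X - Y).
Proof.
rewrite /shear_mx !mulmx_block.
rewrite !(mulmx0, mul0mx, mulmx1, mul1mx, mul_scalar_mx, addr0, add0r, scale1r).
by rewrite !scaleN1r [- Y + X]addrC addrACA addNr subrr addr0.
Qed.

Lemma char_poly_sym_block n (X Y : 'M[R]_n) :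
  char_poly (block_mx X Y Y X) = char_poly (X + Y) * char_poly (X - Y).
Proof.
have shearK : shear_mx n (-1) *m shear_mx n 1 = 1%:M.
  by rewrite mul_shear_mx addNr shear_mx0.
rewrite -(char_poly_conj _ _ shearK).
by rewrite shear_mx_conj_sym_block char_poly_ublock.
Qed.

Lemma char_poly_bordered_sym_block p q (W : 'M[R]_p) (U : 'M[R]_(p, q))
    (V : 'M[R]_(q, p)) (X Y : 'M[R]_q) :
  char_poly (block_mx W (row_mx U U) (col_mx V V) (block_mx X Y Y X)) =
  char_poly (block_mx W (U *+ 2) V (X + Y)) * char_poly (X - Y).
Proof.
pose P : 'M_(p + (q + q)) := block_mx 1%:M 0 0 (shear_mx q (-1)).
pose Q : 'M_(p + (q + q)) := block_mx 1%:M 0 0 (shear_mx q 1).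
have PQ1 : P *m Q = 1%:M.
  rewrite mulmx_block !(mulmx0, mul0mx, mulmx1, addr0, add0r) mul_shear_mx.
  by rewrite addNr shear_mx0 -scalar_mx_block.
have PEQ : P *m block_mx W (row_mx U U) (col_mx V V) (block_mx X Y Y X) *m Q =
    block_mx W (row_mx (U *+ 2) U) (col_mx V 0)
      (block_mx (X + Y) Y 0 (X - Y)).
  rewrite [P *m _]mulmx_block !(mulmx0, mul0mx, mul1mx, addr0, add0r).
  rewrite [_ *m Q]mulmx_block !(mulmx0, mul0mx, mulmx1, addr0, add0r).
  rewrite shear_mx_conj_sym_block [row_mx U U *m _]mul_row_block.
  rewrite [_ *m col_mx V V]mul_block_col.
  rewrite !(mulmx0, mul0mx, mulmx1, mul1mx, addr0, add0r) -mulr2n.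
  by rewrite mul_scalar_mx scaleN1r addNr.
rewrite -(char_poly_conj _ _ PQ1) PEQ.
by rewrite block_mxA char_poly_castmx row_mx0 char_poly_ublock.
Qed.

End BlockCharPoly.

Theorem theorem3p17 (R : realType) (p q : nat)
  (B : 'M[R]_(p, q)) (G : 'M[R]_q) (G' : 'M[R]_p)
  (hG : G^T = G) (hG' : G'^T = G') :
  let A : 'M[R]_(p + (q + q)) :=
    block_mx G' (row_mx B B) (col_mx B^T B^T) (block_mx 0 G G 0) in
  let C : 'M[R]_(p + (q + q)) :=
    block_mx G' (row_mx B B) (col_mx B^T B^T) (block_mx G 0 0 G) in
  cospectral (dsum A (block_mx G 0 0 G)) (dsum C (block_mx 0 G G 0)).
Proof.
move=> A C lambda; congr mup.
rewrite /dsum !char_poly_ublock /A /C !char_poly_bordered_sym_block.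
rewrite char_poly_sym_block add0r addr0 subr0 sub0r.
by rewrite -!mulrA; congr (_ * _); rewrite mulrC -mulrA.
Qed.
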